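(* Let $(X,d)$ be a path-connected metric space, $x_0\in X$, $n\geq1$. For every $r>0$ there exists $(\mathscr{U},U_0)\in\mathrm{cov}(X)$ such that $\mathrm{Span}_n(\mathscr{U},x_0)\leq B_\rho(e,r)$, where $B_\rho(e,r)=\{a\in\pi_n(X,x_0)\mid\rho(a,e)<r\}$.
   Context: Identify $n$-loops with based maps $(S^n,d_0)\to(X,x_0)$, with uniform metric $\mu(\alpha,\beta)=\sup_t d(\alpha(t),\beta(t))$; $\rho(a,b)=\inf\{\mu(\alpha,\beta)\mid\alpha\in a,\beta\in b\}$ on $\pi_n(X,x_0)$, $e$ the identity. $\mathrm{cov}(X)$ is the set of pairs $(\mathscr{U},U_0)$ with $\mathscr{U}$ a locally finite open cover of $X$ and $U_0\in\mathscr{U}$ containing $x_0$. For an open cover $\mathscr{U}$, the $n$-th Spanier group $\mathrm{Span}_n(\mathscr{U},x_0)$ is the subgroup of $\pi_n(X,x_0)$ generated by all classes $[\gamma\ast f]$ where $\gamma:[0,1]\to X$ is a path with $\gamma(0)=x_0$, $f:(S^n,d_0)\to(X,\gamma(1))$ has image in some $U\in\mathscr{U}$, and $\gamma\ast f:(S^n,d_0)\to(X,x_0)$ is the path-conjugate (the standard map obtained by precomposing with a fixed retraction $S^n\times[0,1]\to S^n\times\{0\}\cup\{d_0\}\times[0,1]$ the map that is $f$ on $S^n\times\{0\}$ and runs along $\gamma$ on $\{d_0\}\times[0,1]$; it represents the image of $[f]$ under the change-of-basepoint isomorphism along $\gamma$). *)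

From HB Require Import structures.
From mathcomp Require Import all_boot all_order all_algebra.
From mathcomp Require Import all_classical all_reals all_analysis.
Unset Printing Implicit Defensive.
Import Order.TTheory GRing.Theory Num.Theory.
Import numFieldTopology.Exports numFieldNormedType.Exports.
Local Open Scope classical_set_scope.
Local Open Scope ring_scope.

(* n-loops are modelled as maps of the cube I^n (I^n/bd I^n = S^n) sending
   the boundary to the base point *)

Section Defs.
Context {R : realType} {X : metricType R}.

Definition path_connected :=
  forall x y : X, exists g : R -> X,
    {within `[0, 1], continuous g} /\ g 0 = x /\ g 1 = y.

Definition cube (n : nat) : set 'rV[R]_n :=
  [set s | forall i, 0 <= s ord0 i <= 1].
Definition cube_bdry (n : nat) : set 'rV[R]_n :=
  [set s | cube n s /\ exists i, s ord0 i = 0 \/ s ord0 i = 1].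

Definition nloop (n : nat) (x0 : X) (f : 'rV[R]_n -> X) :=
  {within cube n, continuous f} /\ (forall s, cube_bdry n s -> f s = x0).

Definition nhomotopic (n : nat) (x0 : X) (f g : 'rV[R]_n -> X) :=
  exists H : 'rV[R]_n * R -> X,
    {within cube n `*` `[0, 1], continuous H} /\
    (forall s, cube n s -> H (s, 0) = f s /\ H (s, 1) = g s) /\
    (forall s t, cube_bdry n s -> 0 <= t <= 1 -> H (s, t) = x0).

Definition hclass (n : nat) (x0 : X) (f : 'rV[R]_n -> X) : set ('rV[R]_n -> X) :=
  [set g | nloop n x0 g /\ nhomotopic n x0 f g].

Definition pin (n : nat) (x0 : X) : set (set ('rV[R]_n -> X)) :=
  [set a | exists f, nloop n x0 f /\ a = hclass n x0 f].

Definition pin_e (n : nat) (x0 : X) := hclass n x0 (fun _ : 'rV[R]_n => x0).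

Definition mu (n : nat) (f g : 'rV[R]_n -> X) : R :=
  sup [set mdist (f s) (g s) | s in cube n].
Definition rho (n : nat) (a b : set ('rV[R]_n -> X)) : R :=
  inf [set mu n p.1 p.2 | p in a `*` b].

Definition rset (n : nat) (s : 'rV[R]_n) (i0 : 'I_n) (v : R) : 'rV[R]_n :=
  \row_j (if j == i0 then v else s ord0 j).
Definition nconcat (n : nat) (i0 : 'I_n) (f g : 'rV[R]_n -> X) : 'rV[R]_n -> X :=
  fun s => if s ord0 i0 <= 2^-1 then f (rset n s i0 (2 * s ord0 i0))
           else g (rset n s i0 (2 * s ord0 i0 - 1)).
Definition nreverse (n : nat) (i0 : 'I_n) (f : 'rV[R]_n -> X) : 'rV[R]_n -> X :=
  fun s => f (rset n s i0 (1 - s ord0 i0)).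

(* subgroups of pi_n(X,x0) (group operations computed on representatives) *)
Definition is_subgroup (n : nat) (i0 : 'I_n) (x0 : X)
    (H : set (set ('rV[R]_n -> X))) :=
  H `<=` pin n x0 /\ H (pin_e n x0) /\
  (forall a b f g, H a -> H b -> a f -> b g -> H (hclass n x0 (nconcat n i0 f g))) /\
  (forall a f, H a -> a f -> H (hclass n x0 (nreverse n i0 f))).

Definition gen_subgroup (n : nat) (i0 : 'I_n) (x0 : X)
    (S : set (set ('rV[R]_n -> X))) : set (set ('rV[R]_n -> X)) :=
  [set a | forall H, is_subgroup n i0 x0 H -> S `<=` H -> H a].

(* path-conjugate gamma * f: f shrunk to the middle cube [1/4,3/4]^n,
   gamma run radially on the outer shell (gamma 0 on the boundary) *)
Definition cube_rad (n : nat) (s : 'rV[R]_n) : R :=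
  \big[Num.max/0]_(i < n) `|2 * s ord0 i - 1|.
Definition path_conj (n : nat) (gamma : R -> X) (f : 'rV[R]_n -> X) :
    'rV[R]_n -> X :=
  fun s => if cube_rad n s <= 2^-1 then f (\row_j (2 * s ord0 j - 2^-1))
           else gamma (2 - 2 * cube_rad n s).

Definition Span (n : nat) (i0 : 'I_n) (UU : set (set X)) (x0 : X) :=
  gen_subgroup n i0 x0
    [set a | exists (gamma : R -> X) (f : 'rV[R]_n -> X) (U : set X),
        {within `[0, 1], continuous gamma} /\ gamma 0 = x0 /\
        nloop n (gamma 1) f /\ UU U /\ f @` cube n `<=` U /\
        a = hclass n x0 (path_conj n gamma f)].

Definition open_cover (UU : set (set X)) :=
  (forall U, UU U -> open U) /\ (forall x, exists U, UU U /\ U x).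
Definition locally_finite (UU : set (set X)) :=
  forall x : X, exists N, nbhs x N /\ finite_set [set U | UU U /\ U `&` N !=set0].
Definition cov (x0 : X) : set (set (set X) * set X) :=
  [set p | open_cover p.1 /\ locally_finite p.1 /\ p.1 p.2 /\ p.2 x0].

End Defs.

From HB Require Import structures.
From mathcomp Require Import all_boot all_order all_algebra.
From mathcomp Require Import all_classical all_reals all_analysis.
From mathcomp Require Import wochoice.
From mathcomp.algebra_tactics Require Import ring lra.
Import Order.TTheory GRing.Theory Num.Theory.
Import numFieldTopology.Exports numFieldNormedType.Exports.
Local Open Scope classical_set_scope.
Local Open Scope ring_scope.

(* By a Stone-type construction (M. E. Rudin's proof that metric
   spaces are paracompact, run on a well-ordering of X) there is a locally
   finite open cover of X by sets of diameter < r/2.  A Spanier generator with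
   f inside such a set U is represented by [path_conj gamma f], which is
   uniformly within diam U of [path_conj gamma (cst (gamma 1))], and the latter
   is null-homotopic by shrinking gamma to its initial point.  The classes having a
   representative uniformly within some c < r of a representative of e form a
   subgroup, since concatenation and reversal do not increase uniform
   distance; so they contain the Spanier group, and all of them lie in the
   rho-ball of radius r around e. *)

Section ContinuousOn.
Context {R : realType}.

Definition continuous_on {T U : pseudoMetricType R} (A : set T) (f : T -> U) :=
  forall x, A x -> forall e : R, 0 < e -> exists2 d : R, 0 < d &
    forall y, A y -> ball x d y -> ball (f x) e (f y).

Lemma continuous_onP {T U : pseudoMetricType R} (A : set T) (f : T -> U) :
  continuous_on A f <-> {within A, continuous f}.
Proof.
split.
- move=> fA; apply/subspace_continuousP => x Ax; apply/cvg_ballP => e e0.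
  have [d d0 fd] := fA x Ax e e0.
  by apply/nbhs_ballP; exists d => // y xy Ay; exact: fd.
- move=> /subspace_continuousP fA x Ax e e0.
  have /cvg_ballP/(_ e e0)/nbhs_ballP[d d0 fd] := fA x Ax.
  by exists d => // y Ay xy; exact: fd.
Qed.

Lemma ballR (x y d : R) : ball x d y <-> `|x - y| < d.
Proof. by []. Qed.

Lemma ball_row n (s s' : 'rV[R]_n) d :
  ball s d s' <-> 0 < d /\ forall i, `|s ord0 i - s' ord0 i| < d.
Proof.
split=> [[d0 ss']|[d0 ss']]; split => //.
- by move=> i; exact: ss'.
- by move=> i j; rewrite (ord1 i); exact: ss'.
Qed.

Lemma continuous_on_eq {T U : pseudoMetricType R} (A : set T) (f g : T -> U) :
  (forall x, A x -> f x = g x) -> continuous_on A f -> continuous_on A g.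
Proof.
move=> fg fA x Ax e e0; have [d d0 fd] := fA x Ax e e0.
by exists d => // y Ay; rewrite -!fg //; exact: fd.
Qed.

Lemma continuous_on_comp {T U W : pseudoMetricType R} (A : set T) (B : set U)
    (phi : T -> U) (g : U -> W) :
  (forall x, A x -> B (phi x)) -> continuous_on A phi -> continuous_on B g ->
  continuous_on A (fun x => g (phi x)).
Proof.
move=> AB phiA gB x Ax e e0.
have [d1 d10 gd1] := gB (phi x) (AB _ Ax) e e0.
have [d2 d20 phid2] := phiA x Ax d1 d10.
by exists d2 => // y Ay xy; apply: gd1; [exact: AB | exact: phid2].
Qed.

Lemma continuous_on_cst {T U : pseudoMetricType R} (A : set T) (c : U) :
  continuous_on A (fun _ => c).
Proof. by move=> x _ e e0; exists 1 => // y _ _; exact: ballxx. Qed.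

Lemma lipschitz_continuous_on {T U : pseudoMetricType R} {A : set T}
    {phi : T -> U} (K : R) :
  0 < K -> (forall x y d, A x -> A y -> 0 < d -> ball x d y ->
                          ball (phi x) (K * d) (phi y)) ->
  continuous_on A phi.
Proof.
move=> K0 phiK x Ax e e0; have eK0 : 0 < e / K by rewrite divr_gt0.
exists (e / K) => // y Ay xy.
by have := phiK x y _ Ax Ay eK0 xy; rewrite mulrC divfK ?gt_eqF.
Qed.

Lemma continuous_on_comp_lipschitz {T U W : pseudoMetricType R} {A : set T}
    {B : set U} {phi : T -> U} {g : U -> W} (K : R) :
  0 < K -> (forall x y d, 0 < d -> ball x d y -> ball (phi x) (K * d) (phi y)) ->
  (forall x, A x -> B (phi x)) -> continuous_on B g ->
  continuous_on A (fun x => g (phi x)).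
Proof.
move=> K0 phiK AB; apply: continuous_on_comp AB _.
by apply: (lipschitz_continuous_on K) => // x y d _ _; exact: phiK.
Qed.

Lemma continuous_on_paste {T U : pseudoMetricType R} (A : set T) (phi : T -> R)
    (c : R) (F G : T -> U) :
  continuous_on A phi ->
  continuous_on (A `&` [set x | phi x <= c]) F ->
  continuous_on (A `&` [set x | c <= phi x]) G ->
  (forall x, A x -> phi x = c -> F x = G x) ->
  continuous_on A (fun x => if phi x <= c then F x else G x).
Proof.
move=> phiA FA GA FG x Ax e e0.
have ball_min d1 d2 y : ball x (Num.min d1 d2) y -> ball x d1 y /\ ball x d2 y.
  by move=> xy; split; apply: le_ball xy; rewrite ge_min lexx ?orbT.
case: (ltgtP (phi x) c) => xc.
- have [d1 d10 phid1] := phiA x Ax (c - phi x) ltac:(lra).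
  have [d2 d20 Fd2] := FA x (conj Ax (ltW xc)) e e0.
  exists (Num.min d1 d2) => [|y Ay /ball_min[xy1 xy2]]; first by rewrite lt_min d10.
  have /ballR : ball (phi x) (c - phi x) (phi y) by exact: phid1.
  rewrite ltr_norml => /andP[yc _].
  have yc' : phi y <= c by lra.
  by rewrite yc'; apply: Fd2.
- have [d1 d10 phid1] := phiA x Ax (phi x - c) ltac:(lra).
  have [d2 d20 Gd2] := GA x (conj Ax (ltW xc)) e e0.
  exists (Num.min d1 d2) => [|y Ay /ball_min[xy1 xy2]]; first by rewrite lt_min d10.
  have /ballR : ball (phi x) (phi x - c) (phi y) by exact: phid1.
  rewrite ltr_norml => /andP[_ cy].
  have cy' : c < phi y by lra.
  by rewrite leNgt cy' /=; apply: Gd2 => //; split => //=; exact: ltW.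
- have [xc1 xc2] : phi x <= c /\ c <= phi x by rewrite xc.
  have [d1 d10 Fd1] := FA x (conj Ax xc1) e e0.
  have [d2 d20 Gd2] := GA x (conj Ax xc2) e e0.
  exists (Num.min d1 d2) => [|y Ay /ball_min[xy1 xy2]]; first by rewrite lt_min d10.
  case: leP => yc; first exact: Fd1.
  by rewrite FG //; apply: Gd2 => //; split => //=; exact: ltW.
Qed.

End ContinuousOn.

Section SmallLocallyFiniteCover.
Context {R : realType} {X : metricType R}.

(* [m y] is the least point of the [e]-ball around [y] for a well-ordering of
   [X]. *)
Lemma wellorder_centers (e : R) : 0 < e -> exists m : X -> X,
  (forall y, mdist (m y) y < e) /\
  (forall y y', m y <> m y' -> e <= mdist (m y) y' \/ e <= mdist (m y') y).
Proof.
move=> e0; have [le wo] := well_ordering_principle X.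
have le_anti : antisymmetric le.
  by move=> a b; apply: (@wo_chain_antisymmetric X le predT) => // A _; exact: wo.
have least y : exists z : X, mdist z y < e /\ forall q, mdist q y < e -> le z q.
  have [|z [[zy zmin] _]] := wo [pred q : X | `[< mdist q y < e >]].
    by exists y; rewrite inE /= mdistxx.
  move: zy; rewrite inE /= => zy.
  by exists z; split=> // q qy; apply: zmin; rewrite inE.
have [m mP] := choice least; exists m; split=> [y|y y' myy']; first by case: (mP y).
case: (leP e (mdist (m y) y')) => [|my'y]; first by left.
case: (leP e (mdist (m y') y)) => [|myy]; first by right.
by exfalso; apply: myy'; apply: le_anti; rewrite (mP y).2 // (mP y').2.
Qed.

Variables (e : R) (m : X -> X).
Hypothesis e_gt0 : 0 < e.
Hypothesis m_near : forall y, mdist (m y) y < e.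
Hypothesis m_apart :
  forall y y', m y <> m y' -> e <= mdist (m y) y' \/ e <= mdist (m y') y.

Definition delta k : R := e / 4 / 2 ^+ k.

Lemma delta_gt0 k : 0 < delta k.
Proof. by rewrite !divr_gt0 // exprn_gt0. Qed.

Lemma deltaS k : delta k.+1 = delta k / 2.
Proof. by rewrite /delta exprSr invfM mulrA. Qed.

Lemma delta_le {j k} : (j <= k)%N -> delta k <= delta j.
Proof.
move=> /subnK <-; elim: (k - j)%N => [|i ih]; first by rewrite add0n.
by rewrite addSn deltaS; have := delta_gt0 (i + j); lra.
Qed.

Lemma delta_double_le {j k} : (j < k)%N -> 2 * delta k <= delta j.
Proof. by move=> /delta_le; rewrite deltaS; have := delta_gt0 j; lra. Qed.

Lemma delta_small eta : 0 < eta -> exists k, delta k < eta.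
Proof.
move=> eta0; have [k ek] : exists k, e / 4 / eta < k%:R.
  by exists (Num.bound (e / 4 / eta)); apply: archi_boundP; rewrite !divr_ge0 // ltW.
exists k; rewrite /delta ltr_pdivrMr ?exprn_gt0 // -ltr_pdivrMl //.
rewrite mulrC; apply: (lt_le_trans ek); rewrite -natrX ler_nat.
exact/ltnW/ltn_expl.
Qed.

Definition nbhd (A : set X) (d : R) := [set x | exists2 y, A y & mdist y x < d].

Definition core (A : set X) k :=
  [set y | mdist (m y) y < e - 3 * delta k /\ ~ A y].

Fixpoint covered k : set X :=
  if k is j.+1 then covered j `|` nbhd (core (covered j) j) (delta j) else set0.

Definition shell k := nbhd (core (covered k) k) (delta k).

Definition piece (p : X) k :=
  nbhd (core (covered k) k `&` [set y | m y = p]) (delta k).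

Definition pieces := [set U | exists p k, U = piece p k].

Lemma nbhd_open A d : open (nbhd A d).
Proof.
rewrite openE => x [y Ay yx]; apply/nbhs_ballP; exists (d - mdist y x).
  by rewrite /= subr_gt0.
move=> z; rewrite ballEmdist /= => xz; exists y => //.
by have := metric_triangle y x z; lra.
Qed.

Lemma nbhdS A B d : A `<=` B -> nbhd A d `<=` nbhd B d.
Proof. by move=> AB x [y Ay yx]; exists y => //; exact: AB. Qed.

Lemma covered_mono {j k} : (j <= k)%N -> covered j `<=` covered k.
Proof.
move=> /subnK <-; elim: (k - j)%N => [|i ih]; first by rewrite add0n.
by rewrite addSn => x /ih; left.
Qed.

Lemma shell_covered {j k} : (j < k)%N -> shell j `<=` covered k.
Proof. by move=> jk x jx; apply: (covered_mono jk); right. Qed.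

Lemma covered_shell k x : covered k x -> exists2 j, (j < k)%N & shell j x.
Proof.
elim: k => [//|k ih] /= [/ih[j jk jx]|kx]; last by exists k.
by exists j => //; exact: ltnW.
Qed.

Lemma piece_shell p k : piece p k `<=` shell k.
Proof. by apply: nbhdS => y []. Qed.

Lemma piece_small p k : piece p k `<=` [set z | mdist p z < e].
Proof.
move=> z [y [[ye _] <-] yz] /=.
by have := metric_triangle (m y) y z; have := delta_gt0 k; lra.
Qed.

Lemma pieces_cover x : exists p k, piece p k x.
Proof.
have [k kx] : exists k, delta k < (e - mdist (m x) x) / 3.
  by apply: delta_small; have := m_near x; lra.
case: (pselect (covered k x)) => [/covered_shell[j _ [y [ye yc] yx]]|xk].
  by exists (m y), j, y.
exists (m x), k, x; last by rewrite mdistxx delta_gt0.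
by split=> //; split=> //; lra.
Qed.

(* Points of a level [i >= k] piece near [x] would lie in [shell n], which is
   already covered at level [i]. *)
Lemma piece_far {x eta n k q i} : ball x eta `<=` shell n -> (n < k <= i)%N ->
  2 * delta k < eta -> ~ (piece q i `&` ball x (delta k) !=set0).
Proof.
move=> xn /andP[nk ki] ketal [z [[y [[_ yi] _] yz] /=]].
rewrite ballEmdist /= => xz.
have ik := delta_le ki.
apply: yi; apply: (shell_covered (leq_trans nk ki)); apply: xn.
rewrite ballEmdist /=; have := metric_triangle x z y.
by rewrite (metric_sym z y); lra.
Qed.

Lemma piece_unique {x k q q' i} : (i < k)%N ->
  piece q i `&` ball x (delta k) !=set0 -> piece q' i `&` ball x (delta k) !=set0 ->
  q = q'.
Proof.
move=> ik [z [[y [[ye _] <-] yz] /= xz]] [z' [[y' [[y'e _] <-] y'z'] /= xz']].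
move: xz xz'; rewrite !ballEmdist /= => xz xz'.
have ki := delta_double_le ik.
have yy' : mdist y y' < 3 * delta i.
  have := metric_triangle y z y'; have := metric_triangle z x y'.
  have := metric_triangle x z' y'.
  by rewrite (metric_sym z x) (metric_sym z' y'); lra.
apply: contrapT => /m_apart[].
- by have := metric_triangle (m y) y y'; lra.
- by have := metric_triangle (m y') y' y; rewrite (metric_sym y' y); lra.
Qed.

Lemma pieces_locally_finite : locally_finite pieces.
Proof.
move=> x; have [p [n xpn]] := pieces_cover x.
have /nbhs_ballP[eta eta0 xeta] : nbhs x (piece p n).
  by apply: open_nbhs_nbhs; split=> //; exact: nbhd_open.
have [k0 k0eta] := delta_small (eta / 2) ltac:(by rewrite divr_gt0).
pose k := maxn k0 n.+1.
have keta : 2 * delta k < eta.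
  by have := delta_le (leq_maxl k0 n.+1); lra.
have nk : (n < k)%N by rewrite leq_maxr.
have xn : ball x eta `<=` shell n by move=> z /xeta; exact: piece_shell.
exists (ball x (delta k)); split; first exact: nbhsx_ballx (delta_gt0 k).
pose meets q i := piece q i `&` ball x (delta k) !=set0.
pose center i := xget x [set q | meets q i].
apply: (@sub_finite_set _ _ [set piece (center i) i | i in `I_k]); last first.
  exact/finite_image/finite_II.
move=> _ [[q [i ->]] qi]; have ik : (i < k)%N.
  by rewrite ltnNge; apply/negP => ki; apply: (piece_far xn _ keta qi); rewrite nk ki.
exists i => //; congr piece; symmetry; apply: (piece_unique ik qi).
exact: (xgetPex x (ex_intro (fun q => meets q i) q qi)).
Qed.

End SmallLocallyFiniteCover.

Lemma small_locally_finite_cover {R : realType} {X : metricType R} (x0 : X)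
    {e : R} :
  0 < e -> exists p : set (set X) * set X, cov x0 p /\
    forall U, p.1 U -> exists c : X, U `<=` [set z | mdist c z < e].
Proof.
move=> e0; have [m [m_near m_apart]] := @wellorder_centers R X e e0.
have [p [k x0pk]] := @pieces_cover R X e m e0 m_near x0.
exists (pieces e m, piece e m p k).
split; last by move=> _ [q [i ->]]; exists q; exact: piece_small.
split; [split|split; [exact: pieces_locally_finite|by split => //; exists p, k]].
- by move=> _ [q [i ->]]; exact: nbhd_open.
- move=> x; have [q [i xqi]] := @pieces_cover R X e m e0 m_near x.
  by exists (piece e m q i); split => //; exists q, i.
Qed.

Section Cube.
Context {R : realType} {n : nat}.
Local Notation V := 'rV[R]_n.
Local Notation rad := (cube_rad n).

Lemma in_cubeI (p : V * R) : (cube n `*` `[0, 1]) p <-> cube n p.1 /\ 0 <= p.2 <= 1.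
Proof. by split=> -[sp tp]; split=> //; move: tp; rewrite /= in_itv. Qed.

Lemma cube0 : cube n (0 : V).
Proof. by move=> i; rewrite mxE lexx ler01. Qed.

Lemma rsetE (s : V) i0 v j : rset n s i0 v ord0 j = if j == i0 then v else s ord0 j.
Proof. by rewrite mxE. Qed.

Lemma rset_cube (s : V) i0 v : cube n s -> 0 <= v <= 1 -> cube n (rset n s i0 v).
Proof. by move=> s01 v01 j; rewrite rsetE; case: ifP. Qed.

Lemma rset_bdry (s : V) i0 v : cube_bdry n s -> 0 <= v <= 1 ->
  (s ord0 i0 = 0 \/ s ord0 i0 = 1 -> v = 0 \/ v = 1) -> cube_bdry n (rset n s i0 v).
Proof.
move=> [s01 [j sj]] v01 sv; split; first exact: rset_cube.
case: (eqVneq j i0) => [ji|ji].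
  by subst j; exists i0; rewrite rsetE eqxx; exact: sv sj.
by exists j; rewrite rsetE (negbTE ji).
Qed.

Lemma rset_bdry_face (s : V) i0 v : cube n s -> v = 0 \/ v = 1 ->
  cube_bdry n (rset n s i0 v).
Proof.
move=> s01 v01; split; last by exists i0; rewrite rsetE eqxx.
by apply: rset_cube => //; case: v01 => ->; rewrite lexx ler01.
Qed.

Lemma cube_rad_ge0 (s : V) : 0 <= rad s.
Proof. by rewrite /cube_rad; elim/big_ind: _ => // a b a0 b0; rewrite le_max a0. Qed.

Lemma cube_rad_ge (s : V) i : `|2 * s ord0 i - 1| <= rad s.
Proof. exact: le_bigmax. Qed.

Lemma cube_rad_le1 {s : V} : cube n s -> rad s <= 1.
Proof.
by move=> s01; apply: bigmax_le => // i _; rewrite ler_norml; have := s01 i; lra.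
Qed.

Lemma cube_rad_bdry (s : V) : cube_bdry n s -> rad s = 1.
Proof.
move=> [s01 [j sj]]; apply/eqP; rewrite eq_le cube_rad_le1 //=.
by apply: le_trans (cube_rad_ge s j); case: sj => ->; rewrite ler_normr; lra.
Qed.

Lemma cube_rad_attained (i0 : 'I_n) (s : V) : exists j, rad s = `|2 * s ord0 j - 1|.
Proof.
have [j _ sj] := @eq_bigmax _ _ _ 0 i0 predT (fun i => `|2 * s ord0 i - 1|) isT
  (fun i _ => normr_ge0 _).
by exists j; rewrite -sj.
Qed.

Lemma cube_rad_lipschitz (s s' : V) d : ball s d s' -> `|rad s - rad s'| < 2 * d.
Proof.
move=> /ball_row[d0 ss'].
have rad_lt (a b : V) : (forall i, `|a ord0 i - b ord0 i| < d) -> rad a < rad b + 2 * d.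
  move=> ab; apply: bigmax_lt => [|i _]; first by have := cube_rad_ge0 b; lra.
  have := cube_rad_ge b i; have := ab i.
  by rewrite !ltr_norml ler_norml; lra.
have := rad_lt s s' ss'.
have := rad_lt s' s (fun i => ltac:(rewrite distrC; exact: ss')).
by rewrite ltr_norml; lra.
Qed.

Definition shrink (s : V) : V := \row_j (2 * s ord0 j - 2^-1).

Lemma shrink_cube (s : V) : cube n s -> rad s <= 2^-1 -> cube n (shrink s).
Proof.
move=> s01 sr j; rewrite mxE.
by have := le_trans (cube_rad_ge s j) sr; rewrite ler_norml; lra.
Qed.

Lemma shrink_bdry (i0 : 'I_n) (s : V) : cube n s -> rad s = 2^-1 ->
  cube_bdry n (shrink s).
Proof.
move=> s01 sr; split; first by apply: shrink_cube; rewrite ?sr.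
have [j sj] := cube_rad_attained i0 s; exists j; rewrite mxE.
by move: sj; rewrite sr; case: ger0P => _ ?; [right | left]; lra.
Qed.

Lemma shrink_lipschitz (s s' : V) d :
  ball s d s' -> ball (shrink s) (2 * d) (shrink s').
Proof.
move=> /ball_row[d0 ss']; apply/ball_row; split=> [|j]; first lra.
rewrite !mxE (_ : _ - _ = 2 * (s ord0 j - s' ord0 j)); last ring.
by rewrite normrM ger0_norm // ltr_pM2l.
Qed.

(* [gamma (cone_time (s, t))] is
   [path_conj (fun u => gamma (t * u)) (cst (gamma t)) s]; as [t] runs from
   0 to 1 this deforms the constant loop into [path_conj gamma (cst (gamma 1))]. *)
Definition cone_time (p : V * R) : R := p.2 * Num.min 1 (2 - 2 * rad p.1).

Lemma cone_time_itv (p : V * R) : cube n p.1 -> 0 <= p.2 <= 1 -> 0 <= cone_time p <= 1.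
Proof.
move=> s01 /andP[t0 t1]; have r1 := cube_rad_le1 s01.
by rewrite /cone_time minEle; case: (leP 1) => r; apply/andP; split; nra.
Qed.

Lemma cone_time_lipschitz (p q : V * R) d : cube n p.1 -> 0 <= q.2 <= 1 ->
  ball p d q -> `|cone_time p - cone_time q| < 6 * d.
Proof.
move=> s01 /andP[t0 t1] [/cube_rad_lipschitz + /ballR].
rewrite !ltr_norml => /andP[r1 r2] /andP[d1 d2]; have r := cube_rad_le1 s01.
rewrite /cone_time !minEle.
case: (leP 1 (2 - 2 * rad p.1)); case: (leP 1 (2 - 2 * rad q.1)) => ? ?.
all: by apply/andP; split; nra.
Qed.

Lemma cone_time0 (s : V) : cone_time (s, 0) = 0.
Proof. exact: mul0r. Qed.

Lemma cone_time1 (s : V) :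
  cone_time (s, 1) = if rad s <= 2^-1 then 1 else 2 - 2 * rad s.
Proof.
by rewrite /cone_time mul1r; case: leP => h; [rewrite min_l | rewrite min_r]; lra.
Qed.

Lemma cone_time_bdry (s : V) t : cube_bdry n s -> cone_time (s, t) = 0.
Proof.
by move=> sb; rewrite /cone_time cube_rad_bdry // mulr1 subrr min_r ?ler01 ?mulr0.
Qed.

End Cube.

Section Homotopy.
Context {R : realType} {X : metricType R} {n : nat} {x0 : X}.
Local Notation V := 'rV[R]_n.
Local Notation cylinder := (cube n `*` `[0, 1] : set (V * R)).

Lemma ball_affine_snd (g : R -> R) k (p q : V * R) d :
  1 <= `|k| -> 0 < d -> (forall a b, g a - g b = k * (a - b)) -> ball p d q ->
  ball (p.1, g p.2) (`|k| * d) (q.1, g q.2).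
Proof.
move=> k1 d0 gk [pq1 /ballR pq2]; split=> /=.
  by apply: le_ball pq1; rewrite ler_peMl // ltW.
by apply/ballR; rewrite gk normrM ltr_pM2l //; lra.
Qed.

Lemma ball_affine_coord (i0 : 'I_n) (g : R -> R) k (p q : V * R) d :
  1 <= `|k| -> 0 < d -> (forall a b, g a - g b = k * (a - b)) -> ball p d q ->
  ball (rset n p.1 i0 (g (p.1 ord0 i0)), p.2) (`|k| * d)
       (rset n q.1 i0 (g (q.1 ord0 i0)), q.2).
Proof.
move=> k1 d0 gk [/ball_row[_ pq1] pq2].
have dkd : d <= `|k| * d by rewrite ler_peMl // ltW.
split=> /=; last exact: le_ball pq2.
apply/ball_row; split=> [|j]; first by apply: lt_le_trans dkd.
rewrite !rsetE; case: ifP => _; last exact: lt_le_trans (pq1 j) dkd.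
by rewrite gk normrM ltr_pM2l //; lra.
Qed.

Lemma continuous_on_affine_snd {A : set (V * R)} {H : V * R -> X} g k :
  1 <= `|k| -> (forall a b, g a - g b = k * (a - b)) ->
  (forall p, A p -> cube n p.1 /\ 0 <= g p.2 <= 1) -> continuous_on cylinder H ->
  continuous_on A (fun p => H (p.1, g p.2)).
Proof.
move=> k1 gk Acyl; apply: (continuous_on_comp_lipschitz `|k|); first lra.
- by move=> p q d d0; exact: ball_affine_snd.
- by move=> p /Acyl[s01 g01]; split=> //=; rewrite in_itv.
Qed.

Lemma continuous_on_affine_coord {A : set (V * R)} {H : V * R -> X} i0 g k :
  1 <= `|k| -> (forall a b, g a - g b = k * (a - b)) ->
  (forall p, A p -> cube n p.1 /\ 0 <= g (p.1 ord0 i0) <= 1 /\ 0 <= p.2 <= 1) ->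
  continuous_on cylinder H ->
  continuous_on A (fun p => H (rset n p.1 i0 (g (p.1 ord0 i0)), p.2)).
Proof.
move=> k1 gk Acyl; apply: (continuous_on_comp_lipschitz `|k|); first lra.
- by move=> p q d d0; exact: ball_affine_coord.
- move=> p /Acyl[s01 [g01 t01]]; split=> /=; first exact: rset_cube.
  by rewrite in_itv.
Qed.

Lemma continuous_on_slice (H : V * R -> X) t : 0 <= t <= 1 ->
  continuous_on cylinder H -> continuous_on (cube n) (fun s => H (s, t)).
Proof.
move=> t01; apply: (continuous_on_comp_lipschitz 1) => // s s' d d0 ss'.
by rewrite mul1r; split=> //=; exact: ballxx.
Qed.

Lemma nhomotopic_nloop {f g} : nhomotopic n x0 f g -> nloop n x0 f /\ nloop n x0 g.
Proof.
move=> [H [/continuous_onP HC [Hends Hbd]]].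
have end_loop t h : 0 <= t <= 1 -> (forall s, cube n s -> H (s, t) = h s) ->
    nloop n x0 h.
  move=> t01 Hh; split; last by move=> s sb; rewrite -Hh ?Hbd //; exact: sb.1.
  by apply/continuous_onP; apply: continuous_on_eq Hh _; exact: continuous_on_slice.
by split; [apply: (end_loop 0) | apply: (end_loop 1)];
  rewrite ?lexx ?ler01 // => s /Hends[].
Qed.

Lemma nhomotopic_refl {f} : nloop n x0 f -> nhomotopic n x0 f f.
Proof.
move=> [/continuous_onP fC fbd]; exists (fun p => f p.1).
split; last by split=> // s t /fbd.
apply/continuous_onP; apply: (continuous_on_comp_lipschitz 1) fC => //.
- by move=> p q d _ [pq _]; rewrite mul1r.
- by move=> p /in_cubeI[].
Qed.

Lemma nhomotopic_sym {f g} : nhomotopic n x0 f g -> nhomotopic n x0 g f.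
Proof.
move=> [H [/continuous_onP HC [Hends Hbd]]].
exists (fun p => H (p.1, 1 - p.2)); split; last split.
- apply/continuous_onP.
  apply: (continuous_on_affine_snd (fun t => 1 - t) (-1)) HC.
  + by rewrite normrN1.
  + by move=> a b; ring.
  + by move=> p /in_cubeI[s01 t01]; split=> //; lra.
- by move=> s s01; rewrite /= subr0 subrr; case: (Hends s s01).
- by move=> s t sb t01 /=; apply: Hbd => //; lra.
Qed.

Lemma nhomotopic_trans {f g h} :
  nhomotopic n x0 f g -> nhomotopic n x0 g h -> nhomotopic n x0 f h.
Proof.
move=> [H1 [/continuous_onP H1C [H1ends H1bd]]].
move=> [H2 [/continuous_onP H2C [H2ends H2bd]]].
exists (fun p => if p.2 <= 2^-1 then H1 (p.1, 2 * p.2) else H2 (p.1, 2 * p.2 - 1)).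
have norm2 : 1 <= `|2 : R| by rewrite ger0_norm // ler1n.
split; last split.
- apply/continuous_onP; apply: continuous_on_paste.
  + apply: (lipschitz_continuous_on 1) => // p q d _ _ _ [_ pq].
    by rewrite mul1r.
  + apply: (continuous_on_affine_snd (fun t => 2 * t) 2) H1C => //.
      by move=> a b; ring.
    by move=> p [/in_cubeI[s01 t01] /= t2]; split=> //; lra.
  + apply: (continuous_on_affine_snd (fun t => 2 * t - 1) 2) H2C => //.
      by move=> a b; ring.
    by move=> p [/in_cubeI[s01 t01] /= t2]; split=> //; lra.
  + move=> p /in_cubeI[s01 _] /= ->; rewrite divff ?pnatr_eq0 // subrr.
    by rewrite (H1ends _ s01).2 (H2ends _ s01).1.
- move=> s s01 /=; have [half0 half1] : 0 <= 2^-1 :> R /\ ~~ (1 <= 2^-1 :> R).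
    by rewrite -ltNge; split; lra.
  rewrite mulr0 half0 (negbTE half1) mulr1 (_ : 2 - 1 = 1); last lra.
  by rewrite (H1ends _ s01).1 (H2ends _ s01).2.
- by move=> s t sb t01 /=; case: leP => t2; [apply: H1bd | apply: H2bd] => //; lra.
Qed.

Lemma nhomotopic_concat (i0 : 'I_n) {f g f' g'} :
  nhomotopic n x0 f f' -> nhomotopic n x0 g g' ->
  nhomotopic n x0 (nconcat n i0 f g) (nconcat n i0 f' g').
Proof.
move=> [H1 [/continuous_onP H1C [H1ends H1bd]]].
move=> [H2 [/continuous_onP H2C [H2ends H2bd]]].
have norm2 : 1 <= `|2 : R| by rewrite ger0_norm // ler1n.
exists (fun p : V * R => if p.1 ord0 i0 <= 2^-1
                         then H1 (rset n p.1 i0 (2 * p.1 ord0 i0), p.2)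
                         else H2 (rset n p.1 i0 (2 * p.1 ord0 i0 - 1), p.2)).
split; last split.
- apply/continuous_onP; apply: continuous_on_paste.
  + apply: (lipschitz_continuous_on 1) => // p q d _ _ _ [/ball_row[_ pq] _].
    by rewrite mul1r; exact: pq.
  + apply: (continuous_on_affine_coord i0 (fun t => 2 * t) 2) H1C => //.
      by move=> a b; ring.
    by move=> p [/in_cubeI[s01 t01] /= si]; have := s01 i0; do 2 split => //; lra.
  + apply: (continuous_on_affine_coord i0 (fun t => 2 * t - 1) 2) H2C => //.
      by move=> a b; ring.
    by move=> p [/in_cubeI[s01 t01] /= si]; have := s01 i0; do 2 split => //; lra.
  + move=> p /in_cubeI[s01 t01] /= ->; rewrite divff ?pnatr_eq0 // subrr.
    have face v : v = 0 \/ v = 1 -> cube_bdry n (rset n p.1 i0 v).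
      exact: rset_bdry_face.
    rewrite (H1bd _ _ (face 1 (or_intror erefl))) //.
    by rewrite (H2bd _ _ (face 0 (or_introl erefl))).
- move=> s s01; have si01 := s01 i0; rewrite /nconcat /=.
  by case: leP => si; [apply: H1ends | apply: H2ends]; apply: rset_cube => //; lra.
- move=> s t sb t01 /=; have si01 := sb.1 i0.
  by case: leP => si; [apply: H1bd | apply: H2bd] => //; apply: rset_bdry => //; lra.
Qed.

Lemma nhomotopic_reverse (i0 : 'I_n) {f f'} :
  nhomotopic n x0 f f' -> nhomotopic n x0 (nreverse n i0 f) (nreverse n i0 f').
Proof.
move=> [H [/continuous_onP HC [Hends Hbd]]].
exists (fun p : V * R => H (rset n p.1 i0 (1 - p.1 ord0 i0), p.2)); split; last split.
- apply/continuous_onP; apply: (continuous_on_affine_coord i0 (fun t => 1 - t) (-1)) HC.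
  + by rewrite normrN1.
  + by move=> a b; ring.
  + by move=> p /in_cubeI[s01 t01]; have := s01 i0; do 2 split => //; lra.
- by move=> s s01; apply: Hends; apply: rset_cube => //; have := s01 i0; lra.
- move=> s t sb t01 /=; have si01 := sb.1 i0.
  by apply: Hbd => //; apply: rset_bdry => //; lra.
Qed.

Lemma nconcat_cst (i0 : 'I_n) :
  nconcat n i0 (fun _ : V => x0) (fun _ => x0) = (fun _ => x0).
Proof. by apply: funext => s; rewrite /nconcat; case: ifP. Qed.

Lemma path_conj_nloop (i0 : 'I_n) {gamma : R -> X} {f} :
  {within `[0, 1], continuous gamma} -> gamma 0 = x0 -> nloop n (gamma 1) f ->
  nloop n x0 (path_conj n gamma f).
Proof.
move=> /continuous_onP gC g0 [/continuous_onP fC fbd]; split.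
- apply/continuous_onP; apply: continuous_on_paste.
  + apply: (lipschitz_continuous_on 2) => // s s' d _ _ _ ss'.
    exact/ballR/cube_rad_lipschitz.
  + apply: (continuous_on_comp_lipschitz (phi := shrink) 2) fC => //.
      by move=> s s' d _; exact: shrink_lipschitz.
    by move=> s [s01 /= sr]; exact: shrink_cube.
  + apply: (continuous_on_comp_lipschitz (phi := fun s => 2 - 2 * cube_rad n s) 4) gC.
      by [].
      move=> s s' d _ /cube_rad_lipschitz; rewrite !ltr_norml => /andP[? ?].
      by apply/ballR; rewrite ltr_norml; apply/andP; split; lra.
    move=> s [s01 /= sr]; have := cube_rad_le1 s01; rewrite /= in_itv /=; lra.
  + move=> s s01 sr; rewrite sr (_ : 2 - 2 * 2^-1 = 1); last lra.
    exact/fbd/shrink_bdry.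
- move=> s sb; rewrite /path_conj cube_rad_bdry // ifF.
    by rewrite (_ : 2 - 2 * 1 = 0) //; lra.
  by apply/negbTE; rewrite -ltNge; lra.
Qed.

Lemma path_conj_cst_nhomotopic {gamma : R -> X} :
  {within `[0, 1], continuous gamma} -> gamma 0 = x0 ->
  nhomotopic n x0 (fun _ => x0) (path_conj n gamma (fun _ => gamma 1)).
Proof.
move=> /continuous_onP gC g0; exists (fun p => gamma (cone_time p)); split; last split.
- apply/continuous_onP; apply: continuous_on_comp gC.
    by move=> p /in_cubeI[s01 t01]; rewrite /= in_itv; exact: cone_time_itv.
  apply: (lipschitz_continuous_on 6) => // p q d /in_cubeI[s01 _] /in_cubeI[_ t01] _ pq.
  exact/ballR/cone_time_lipschitz.
- move=> s _; rewrite cone_time0 cone_time1 g0 /path_conj; split=> //.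
  by case: ifP.
- by move=> s t sb _; rewrite cone_time_bdry.
Qed.

End Homotopy.

Section UniformlyNearIdentity.
Context {R : realType} {X : metricType R} (n : nat) (x0 : X).
Local Notation V := 'rV[R]_n.

Lemma mu_le {f g : V -> X} {c} :
  (forall s, cube n s -> mdist (f s) (g s) <= c) -> mu n f g <= c.
Proof.
move=> fg; apply: ge_sup => [|_ [s s01 <-]]; last exact: fg.
by exists (mdist (f 0) (g 0)), 0 => //; exact: cube0.
Qed.

Lemma mu_ge0 (f g : V -> X) : 0 <= mu n f g.
Proof.
have fg0 : [set mdist (f s) (g s) | s in cube n] (mdist (f 0) (g 0)).
  by exists 0 => //; exact: cube0.
rewrite /mu; case: (pselect (has_sup [set mdist (f s) (g s) | s in cube n])).
  by move=> fgsup; exact: le_trans (mdist_ge0 _ _) (sup_upper_bound fgsup fg0).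
by move=> /sup_out ->.
Qed.

Lemma rho_le_mu {a b : set (V -> X)} {f g} : a f -> b g -> rho n a b <= mu n f g.
Proof.
move=> af bg; apply: ge_inf; last by exists (f, g).
by exists 0 => _ [fg _ <-]; exact: mu_ge0.
Qed.

Lemma nloop_cst : nloop n x0 (fun _ => x0).
Proof. by split=> //; apply/continuous_onP; exact: continuous_on_cst. Qed.

Lemma hclass_refl {f} : nloop n x0 f -> hclass n x0 f f.
Proof. by move=> floop; split=> //; exact: nhomotopic_refl. Qed.

Lemma hclass_nhomotopic {f0 f g} :
  hclass n x0 f0 f -> hclass n x0 f0 g -> nhomotopic n x0 f g.
Proof. by move=> [_ f0f] [_ f0g]; exact: nhomotopic_trans (nhomotopic_sym f0f) f0g. Qed.

Definition uniformly_near_e (r : R) : set (set (V -> X)) :=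
  [set a | pin n x0 a /\ exists al be (c : R),
    [/\ a al, pin_e n x0 be, c < r & forall s, cube n s -> mdist (al s) (be s) <= c]].

Lemma uniformly_near_e_ball r :
  uniformly_near_e r `<=` [set a | pin n x0 a /\ rho n a (pin_e n x0) < r].
Proof.
move=> a [pa [al [be [c [aal ebe cr albe]]]]]; split=> //.
by apply: le_lt_trans (rho_le_mu aal ebe) _; apply: le_lt_trans cr; exact: mu_le.
Qed.

Lemma uniformly_near_e_e r : 0 < r -> uniformly_near_e r (pin_e n x0).
Proof.
move=> r0; have eloop := hclass_refl nloop_cst.
split; first by exists (fun _ => x0); split=> //; exact: nloop_cst.
by exists (fun _ => x0), (fun _ => x0), 0; split=> // s _; rewrite mdistxx.
Qed.

Lemma uniformly_near_e_concat (i0 : 'I_n) r a b f g :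
  uniformly_near_e r a -> uniformly_near_e r b -> a f -> b g ->
  uniformly_near_e r (hclass n x0 (nconcat n i0 f g)).
Proof.
move=> [[f0 [_ ->]] [al [be [c [aal ebe cr albe]]]]].
move=> [[g0 [_ ->]] [al' [be' [c' [bal' ebe' cr' albe']]]]] af bg.
have fgal :=
  nhomotopic_concat i0 (hclass_nhomotopic af aal) (hclass_nhomotopic bg bal').
have ebb' := nhomotopic_concat i0 ebe.2 ebe'.2; rewrite nconcat_cst in ebb'.
split; first by exists (nconcat n i0 f g); split=> //; exact: (nhomotopic_nloop fgal).1.
exists (nconcat n i0 al al'), (nconcat n i0 be be'), (Num.max c c').
split; [exact: conj (nhomotopic_nloop fgal).2 fgal |
        exact: conj (nhomotopic_nloop ebb').2 ebb' | by rewrite gt_max cr cr' |].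
move=> s s01; have si := s01 i0; rewrite /nconcat; case: (leP (s ord0 i0)) => si2.
- apply: le_trans (albe _ _) _; last by rewrite le_max lexx.
  by apply: rset_cube => //; lra.
- apply: le_trans (albe' _ _) _; last by rewrite le_max lexx orbT.
  by apply: rset_cube => //; lra.
Qed.

Lemma uniformly_near_e_reverse (i0 : 'I_n) r a f :
  uniformly_near_e r a -> a f -> uniformly_near_e r (hclass n x0 (nreverse n i0 f)).
Proof.
move=> [[f0 [_ ->]] [al [be [c [aal ebe cr albe]]]]] af.
have fal := nhomotopic_reverse i0 (hclass_nhomotopic af aal).
have ebe_rev := nhomotopic_reverse i0 ebe.2.
split; first by exists (nreverse n i0 f); split=> //; exact: (nhomotopic_nloop fal).1.
exists (nreverse n i0 al), (nreverse n i0 be), c.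
split; [exact: conj (nhomotopic_nloop fal).2 fal |
        exact: conj (nhomotopic_nloop ebe_rev).2 ebe_rev | exact: cr |].
by move=> s s01; apply: albe; apply: rset_cube => //; have := s01 i0; lra.
Qed.

Lemma uniformly_near_e_subgroup (i0 : 'I_n) r :
  0 < r -> is_subgroup n i0 x0 (uniformly_near_e r).
Proof.
move=> r0; split; first by move=> a [].
split; first exact: uniformly_near_e_e.
by split; [exact: uniformly_near_e_concat | exact: uniformly_near_e_reverse].
Qed.

Lemma path_conj_uniformly_near_e (i0 : 'I_n) (r c : R) (gamma : R -> X)
    (f : V -> X) :
  {within `[0, 1], continuous gamma} -> gamma 0 = x0 -> nloop n (gamma 1) f ->
  (forall s s', cube n s -> cube n s' -> mdist (f s) (f s') <= c) -> c < r ->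
  uniformly_near_e r (hclass n x0 (path_conj n gamma f)).
Proof.
move=> gC g0 floop fdiam cr.
have pcloop := path_conj_nloop i0 gC g0 floop.
have pc_e : nhomotopic n x0 _ (path_conj n gamma _) := path_conj_cst_nhomotopic gC g0.
have f0 : f 0 = gamma 1.
  by apply: floop.2; split; [exact: cube0 | exists i0; left; rewrite mxE].
split; first by exists (path_conj n gamma f).
exists (path_conj n gamma f), (path_conj n gamma (fun _ => gamma 1)), c.
split; [exact: hclass_refl | exact: conj (nhomotopic_nloop pc_e).2 pc_e | exact: cr |].
move=> s s01; rewrite /path_conj; case: ifP => sr.
- by rewrite -f0; apply: fdiam; [exact: shrink_cube | exact: cube0].
- by rewrite mdistxx; apply: le_trans (fdiam _ _ cube0 cube0); exact: mdist_ge0.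
Qed.

End UniformlyNearIdentity.

Theorem proposition5p11 (R : realType) (X : metricType R) (x0 : X) (n : nat)
    (hn : (0 < n)%N) :
  @path_connected R X ->
  forall r : R, 0 < r ->
  exists p, cov x0 p /\
    Span n (Ordinal hn) p.1 x0 `<=`
      [set a | pin n x0 a /\ rho n a (pin_e n x0) < r].
Proof.
move=> _ r r0.
have [p [pcov psmall]] := small_locally_finite_cover x0 (divr_gt0 r0 (ltr0n R 4)).
exists p; split=> // a a_span; apply: uniformly_near_e_ball.
apply: a_span; first exact: uniformly_near_e_subgroup.
move=> _ [gamma [f [U [gC [g0 [floop [pU [fU ->]]]]]]]].
have [c Uc] := psmall U pU.
have r2r : r / 2 < r by lra.
apply: (path_conj_uniformly_near_e _ _ (Ordinal hn) _ (r / 2)) gC g0 floop _ r2r.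
move=> s s' s01 s'01.
have /Uc /= cs := fU _ (imageP f s01); have /Uc /= cs' := fU _ (imageP f s'01).
by have := metric_triangle (f s) c (f s'); rewrite (metric_sym (f s) c) /=; lra.
Qed.
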